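(* Consider the algorithm AOD described in the context, with known horizon $T$, under assumptions (A1)–(A3). Let $\mathbf{u}_1,\ldots,\mathbf{u}_{T+1}\in\Omega$ and $P_T=\sum_{t=1}^T\|\mathbf{u}_{t+1}-\mathbf{u}_t\|_2$. Let $s=\lceil\log_2T\rceil$ and suppose $D2^{i-1}<P_T\le D2^i$ for some $i\in\{1,\ldots,s\}$. Then \[ \sum_{t=1}^T f_t(\mathbf{w}_t)-\sum_{t=1}^T f_t(\mathbf{u}_t)\le\Big(\frac{DG}{2}+\frac{3G}{2}\sqrt{2DP_T}+\sqrt{3c(T)\Big(1+\frac{2P_T}{D}\Big)}\Big)\sqrt{T}, \] where $c(T)=1+\ln T+\ln(1+\log_2 T)+\ln\frac{5+3\ln(1+T)}{2}$.
   Context: Online convex optimization: $\Omega\subseteq\mathbb{R}^d$ convex; in round $t=1,\ldots,T$ the learner plays $\mathbf{w}_t\in\Omega$, then a convex $f_t:\Omega\to\mathbb{R}$ is revealed. Assumptions: (A1) $\|\nabla f_t(\mathbf{w})\|_2\le G$ for all $\mathbf{w}\in\Omega$, $t\in[T]$; (A2) $\mathbf{0}\in\Omega$ and $\max_{\mathbf{w},\mathbf{w}'\in\Omega}\|\mathbf{w}-\mathbf{w}'\|_2\le D$; (A3) $0\le f_t\le1$ on $\Omega$. $\Pi_\Omega$ is Euclidean projection. Dense geometric covering intervals: $\mathcal{D}=\bigcup_{k\ge0,\,2^k\le T}\mathcal{D}_k$, $\mathcal{D}_k=\{[(i-1)2^k+1,\,i2^k]: i=1,2,\ldots\}$. Algorithm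 AOD: for each $I\in\mathcal{D}$ an expert $E_I$ runs online gradient descent $\mathbf{w}_{t+1,I}=\Pi_\Omega[\mathbf{w}_{t,I}-\eta_I\nabla f_t(\mathbf{w}_{t,I})]$, $\eta_I=D/(G\sqrt{|I|})$, over rounds $t\in I$; its initial point is arbitrary if $\min I=1$, and otherwise is the next iterate of the expert of the preceding same-length interval $[\min I-|I|,\min I-1]$ after processing $f_{\min I-1}$. Active experts at round $t$: $\mathcal{A}_t=\{E_I:I\in\mathcal{D},t\in I\}$. Meta-algorithm (AdaNormalHedge): $\Phi(R,C)=\exp([R]_+^2/(3C))$, $[x]_+=\max(0,x)$, $\Phi(0,0)=1$, $w(R,C)=\tfrac12(\Phi(R+1,C+1)-\Phi(R-1,C+1))$, $R_{t-1,I}=\sum_{u=\min I}^{t-1}(f_u(\mathbf{w}_u)-f_u(\mathbf{w}_{u,I}))$, $C_{t-1,I}=\sum_{u=\min I}^{t-1}|f_u(\mathbf{w}_u)-f_u(\mathbf{w}_{u,I})|$, $p_{t,I}=w(R_{t-1,I},C_{t-1,I})/\sum_{E_{I'}\in\mathcal{A}_t}w(R_{t-1,I'},C_{t-1,I'})$, played point $\mathbf{w}_t=\sum_{E_I\in\mathcal{A}_t}p_{t,I}\mathbf{w}_{t,I}$. *)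

From HB Require Import structures.
From mathcomp Require Import all_boot all_order all_algebra.
From mathcomp Require Import all_classical all_reals all_analysis.
Set Implicit Arguments. Unset Strict Implicit. Unset Printing Implicit Defensive.
Import Order.TTheory GRing.Theory Num.Theory.
Local Open Scope ring_scope.

Section AOD.
Variables (R : realType) (d : nat).
Local Notation vec := 'rV[R]_d.

Definition dotv (x y : vec) : R := \sum_(j < d) x 0 j * y 0 j.
Definition norm2 (x : vec) : R := Num.sqrt (dotv x x).

Definition convex_setv (Omega : vec -> Prop) : Prop :=
  forall x y (a : R), Omega x -> Omega y -> 0 <= a -> a <= 1 ->
    Omega (a *: x + (1 - a) *: y).

Definition convex_fun_on (Omega : vec -> Prop) (h : vec -> R) : Prop :=
  forall x y (a : R), Omega x -> Omega y -> 0 <= a -> a <= 1 ->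
    h (a *: x + (1 - a) *: y) <= a * h x + (1 - a) * h y.

Definition is_euclid_proj (Omega : vec -> Prop) (Pi : vec -> vec) : Prop :=
  forall x, Omega (Pi x) /\ (forall y, Omega y -> norm2 (x - Pi x) <= norm2 (x - y)).

(* AdaNormalHedge potential and weight; note [x]_+ = max x 0, and with
   Rocq's convention x/0 = 0 we get Phi 0 0 = exp 0 = 1 as in the paper. *)
Definition pos_part (x : R) : R := Num.max x 0.
Definition Phi (r c : R) : R := expR (pos_part r ^+ 2 / (3 * c)).
Definition anh_weight (r c : R) : R := (Phi (r + 1) (c + 1) - Phi (r - 1) (c + 1)) / 2.

(* learning rate of an expert on an interval of length 2^k *)
Definition eta_lvl (D G : R) (k : nat) : R := D / (G * Num.sqrt (2 ^ k)%:R).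

(* Iterates of the chain of experts at level k (intervals of length 2^k):
   expert E_I with I = [(i-1)2^k+1, i 2^k] plays lvl_iter ... k t for t in I,
   since its initial point is the next iterate of the expert of the preceding
   level-k interval.  t = 1 : the arbitrary initial point x0;
   t+1 : Pi (w_t - eta grad f_t (w_t)). *)
Fixpoint lvl_iter (Pi : vec -> vec) (g : nat -> vec -> vec) (eta : R) (x0 : vec)
    (t : nat) : vec :=
  match t with
  | 0 => x0
  | t'.+1 => if t' is 0 then x0
             else let v := lvl_iter Pi g eta x0 t' in Pi (v - eta *: g t' v)
  end.

(* first round of the unique level-k interval of the covering containing t>=1 *)
Definition istart (k t : nat) : nat := ((t.-1) %/ 2 ^ k) * 2 ^ k + 1.

Section Meta.
Variables (T : nat) (D G : R) (Pi : vec -> vec) (f : nat -> vec -> R)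
  (g : nat -> vec -> vec) (init : nat -> vec) (w : nat -> vec).

Definition expert (k t : nat) : vec := lvl_iter Pi g (eta_lvl D G k) (init k) t.

Definition Rstat (k t : nat) : R :=
  \sum_(istart k t <= s < t) (f s (w s) - f s (expert k s)).
Definition Cstat (k t : nat) : R :=
  \sum_(istart k t <= s < t) `|f s (w s) - f s (expert k s)|.

Definition meta_prob (k t : nat) : R :=
  anh_weight (Rstat k t) (Cstat k t) /
  \sum_(0 <= k' < T.+1 | (2 ^ k' <= T)%N) anh_weight (Rstat k' t) (Cstat k' t).

Definition AOD_plays : Prop :=
  forall t, (1 <= t <= T)%N ->
    w t = \sum_(0 <= k < T.+1 | (2 ^ k <= T)%N) meta_prob k t *: expert k t.
End Meta.
End AOD.

Definition log2r (R : realType) (x : R) : R := ln x / ln 2.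

Definition cT (R : realType) (T : nat) : R :=
  1 + ln (T%:R : R) + ln (1 + log2r (T%:R : R))
    + ln ((5 + 3 * ln (1 + (T%:R : R))) / 2).

From HB Require Import structures.
From mathcomp Require Import all_boot all_order all_algebra.
From mathcomp Require Import all_classical all_reals all_analysis.
From mathcomp Require Import ring lra zify.
Import Order.TTheory GRing.Theory Num.Theory.
Set Implicit Arguments. Unset Strict Implicit. Unset Printing Implicit Defensive.
Local Open Scope ring_scope.

(* Fix the level [k = ceil (log2 T) - i], whose intervals have length [2^k],
   of order [D T / P_T].  The regret splits into the regret of AOD against the
   expert of level [k] plus the dynamic regret of that expert.
   For the first part, the sum of the AdaNormalHedge potentials
   [Phi (R_I, C_I)] of the active experts grows by at most 8 per expert and
   round: [Phi] is convex along the moves of [(R, C)], and the first-order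
   terms cancel because the played point is the weighted mean of the experts
   (Jensen).  Hence on each interval [R <= sqrt (3 C c(T))] with [C] at most
   the interval length, and summing over the at most [2^i <= 1 + 2 P_T / D]
   intervals by Cauchy-Schwarz gives [sqrt (3 c(T) (1 + 2 P_T / D) T)].
   For the second part, online gradient descent with step [eta] has dynamic
   regret at most [(D^2 + 2 D P_T) / (2 eta) + eta G^2 T / 2], and
   [eta = D / (G sqrt (2^k))] balances it to
   [(D G / 2 + 3 G / 2 sqrt (2 D P_T)) sqrt T]. *)

Section ExpBounds.
Variable R : realType.

Lemma expR_convex_comb (s a b : R) : 0 <= s <= 1 ->
  expR ((1 - s) * a + s * b) <= (1 - s) * expR a + s * expR b.
Proof.
move=> /andP[s0 s1].
have := convex_expR (Itv01 s0 s1) b a; rewrite !convRE /=.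
by rewrite [_ * b + _]addrC [_ * expR b + _]addrC.
Qed.

Lemma fact_ge_24_4pow j : (24 * 4 ^ j <= (j + 4)`!)%N.
Proof.
elim: j => [//|j IH]; rewrite addSn factS expnS mulnCA.
by apply: leq_mul; [lia | exact: IH].
Qed.

Lemma sum_geom_quarter_le n : \sum_(0 <= j < n) (4^-1 : R) ^+ j <= 4 / 3.
Proof.
have telescope : 3 / 4 * \sum_(0 <= j < n) (4^-1 : R) ^+ j = 1 - 4^-1 ^+ n.
  elim: n => [|n IH]; first by rewrite big_geq // mulr0 expr0 subrr.
  by rewrite big_nat_recr //= mulrDr IH exprS; field.
have : 0 <= (4^-1 : R) ^+ n by rewrite exprn_ge0.
lra.
Qed.

(* The tail of the exponential series beyond degree 3 is dominated by
   z^4/24 times a geometric series of ratio 1/4. *)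
Lemma expR_le_taylor4 (z : R) : `|z| <= 1 ->
  expR z <= 1 + z + z ^+ 2 / 2 + z ^+ 3 / 6 + z ^+ 4 / 16.
Proof.
move=> z1; apply: limr_le; first exact: is_cvg_series_exp_coeff.
near=> n.
have n4 : (4 <= n)%N by near: n; exists 4%N.
rewrite /series /= (big_cat_nat _ (n := 4)) //= -{2}[4%N]add0n big_addn.
have -> : \sum_(0 <= k < 4) exp_coeff z k = 1 + z + z ^+ 2 / 2 + z ^+ 3 / 6.
  rewrite big_mkord !big_ord_recl big_ord0 /exp_coeff /= /bump /=.
  by rewrite !factS fact0 /= !addn0 !add1n expr0 expr1 !divr1; field.
rewrite lerD2l.
have z4 : 0 <= z ^+ 4 by rewrite exprn_even_ge0.
have coeff_le j : exp_coeff z (j + 4)%N <= z ^+ 4 / 24 * 4^-1 ^+ j.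
  have zj : `|z| ^+ (j + 4)%N <= z ^+ 4.
    have z4E : `|z| ^+ 4 = z ^+ 4 by rewrite -normrX ger0_norm.
    by rewrite exprD z4E -[leRHS]mul1r ler_wpM2r // exprn_ile1.
  have fj : (24 * 4 ^ j)%:R <= (j + 4)`!%:R :> R by rewrite ler_nat fact_ge_24_4pow.
  rewrite natrM natrX in fj.
  apply: le_trans (ler_norm _) _.
  rewrite /exp_coeff normrM normfV normr_nat normrX exprVn -mulrA -invfM.
  by apply: ler_pM => //; rewrite lef_pV2 ?posrE ?mulr_gt0 ?exprn_gt0.
apply: le_trans (ler_sum_nat (fun j _ => coeff_le j)) _.
rewrite -mulr_sumr.
have := sum_geom_quarter_le (n - 4).
have : 0 <= \sum_(0 <= j < n - 4) (4^-1 : R) ^+ j.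
  by apply: sumr_ge0 => j _; rewrite exprn_ge0.
nra.
Unshelve. all: by end_near.
Qed.

Lemma expR_addN_le (y : R) : 0 <= y <= 2 / 3 ->
  expR y + expR (- y) <= 2 + 9 / 8 * y ^+ 2.
Proof.
move=> /andP[y0 y1].
have hp := @expR_le_taylor4 y; have hn := @expR_le_taylor4 (- y).
rewrite normrN ger0_norm in hp hn; last by [].
have y2 : y ^+ 2 <= 4 / 9 by rewrite expr2; nra.
have := hp ltac:(lra); have := hn ltac:(lra).
have -> : (- y) ^+ 3 = - y ^+ 3 by ring.
have -> : (- y) ^+ 2 = y ^+ 2 by ring.
have -> : (- y) ^+ 4 = y ^+ 2 * y ^+ 2 by ring.
have -> : y ^+ 4 = y ^+ 2 * y ^+ 2 by ring.
have := sqr_ge0 y; nra.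
Qed.

Lemma expR1_le : expR (1 : R) <= 273 / 100.
Proof. by have := @expR_le_taylor4 1; rewrite normr1 expr1n lexx => /(_ isT); lra. Qed.

Lemma expR1_ge : 9 / 4 <= expR (1 : R).
Proof.
rewrite [X in expR X]splitr expRD; have := expR_ge1Dx (1 / 2 : R); nra.
Qed.

Lemma expR2_le : expR (2 : R) <= 8.
Proof.
rewrite -[2 : R]/(1 + 1) expRD.
have := expR1_le; have := expR_ge0 (1 : R); nra.
Qed.

End ExpBounds.

Section Potential.
Variable R : realType.
Implicit Types r x y C : R.

Lemma pos_part_ge0 x : 0 <= pos_part x.
Proof. by rewrite le_max lexx orbT. Qed.

Lemma le_pos_part x : x <= pos_part x.
Proof. by rewrite le_max lexx. Qed.

Lemma pos_part0 : pos_part (0 : R) = 0.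
Proof. exact: maxxx. Qed.

Lemma pos_part_le x y : x <= y -> pos_part x <= pos_part y.
Proof.
move=> xy; rewrite ge_max pos_part_ge0 andbT.
exact: le_trans (le_pos_part y).
Qed.

Lemma pos_partMl s x : 0 <= s -> pos_part (s * x) = s * pos_part x.
Proof. by move=> s0; rewrite /pos_part maxr_pMr // mulr0. Qed.

Lemma pos_part_conv s x y : 0 <= s <= 1 ->
  pos_part ((1 - s) * x + s * y) <= (1 - s) * pos_part x + s * pos_part y.
Proof.
move=> /andP[s0 s1]; have s1' : 0 <= 1 - s by lra.
rewrite ge_max; apply/andP; split.
  by apply: lerD; apply: ler_wpM2l => //; exact: le_pos_part.
by apply: addr_ge0; apply: mulr_ge0 => //; exact: pos_part_ge0.
Qed.

Lemma pos_part_sqr_le x y : x <= y -> pos_part x ^+ 2 <= pos_part y ^+ 2.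
Proof. by move=> xy; rewrite ler_sqr ?nnegrE ?pos_part_ge0 ?pos_part_le. Qed.

Lemma Phi_ge1 r C : 0 <= C -> 1 <= Phi r C.
Proof.
move=> C0; apply: le_trans (expR_ge1Dx _); rewrite lerDl.
by rewrite divr_ge0 ?sqr_ge0 ?mulr_ge0.
Qed.

Lemma Phi00 : Phi 0 0 = 1 :> R.
Proof. by rewrite /Phi pos_part0 expr0n /= mul0r expR0. Qed.

Lemma anh_weight_ge0 r C : 0 <= C -> 0 <= anh_weight r C.
Proof.
move=> C0; rewrite divr_ge0 // subr_ge0 ler_expR ler_wpM2r ?invr_ge0 ?mulr_ge0 ?addr_ge0 //.
by apply: pos_part_sqr_le; lra.
Qed.

(* Joint convexity of the perspective (p, C) |-> p^2 / C. *)
Lemma sqr_div_convex s C p0 p1 : 0 <= s <= 1 -> 0 < C ->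
  ((1 - s) * p0 + s * p1) ^+ 2 / (3 * (C + s)) <=
  (1 - s) * (p0 ^+ 2 / (3 * C)) + s * (p1 ^+ 2 / (3 * (C + 1))).
Proof.
move=> /andP[s0 s1] C0.
have [C1 Cs] : 0 < C + 1 /\ 0 < C + s by split; lra.
rewrite -subr_ge0.
have -> : (1 - s) * (p0 ^+ 2 / (3 * C)) + s * (p1 ^+ 2 / (3 * (C + 1))) -
   ((1 - s) * p0 + s * p1) ^+ 2 / (3 * (C + s)) =
   s * (1 - s) * (p0 * (C + 1) - p1 * C) ^+ 2 / (3 * C * (C + 1) * (C + s)).
  by field; rewrite !gt_eqF.
have s1' : 0 <= 1 - s by lra.
apply: divr_ge0; first by apply: mulr_ge0; [exact: mulr_ge0 | exact: sqr_ge0].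
by rewrite !mulr_ge0 // ltW.
Qed.

(* The hypothesis on [C = 0] is needed because [x / 0 = 0] makes [Phi r 0 = 1]
   for every [r]. *)
Lemma Phi_convex s r C x : 0 <= s <= 1 -> 0 <= C -> (C = 0 -> r = 0) ->
  Phi ((1 - s) * r + s * x) (C + s) <= (1 - s) * Phi r C + s * Phi x (C + 1).
Proof.
move=> s01 C0 Cr; apply: le_trans (expR_convex_comb _ _ s01).
rewrite ler_expR; have /andP[s0 s1] := s01.
have [C00|Cn0] := eqVneq C 0.
  rewrite C00 (Cr C00) pos_part0 expr0n /= !mul0r !mulr0 !add0r mulr1 pos_partMl //.
  have [->|sn0] := eqVneq s 0; first by rewrite !mul0r expr0n /= mul0r.
  by rewrite le_eqVlt; apply/orP; left; apply/eqP; field.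
apply: le_trans (sqr_div_convex _ _ s01 _); last by rewrite lt0r Cn0.
rewrite ler_wpM2r ?invr_ge0 ?mulr_ge0 ?addr_ge0 // ler_sqr ?nnegrE ?pos_part_ge0 //.
  exact: pos_part_conv.
by apply: addr_ge0; apply: mulr_ge0; rewrite ?pos_part_ge0 //; lra.
Qed.

Lemma Phi_shift_le8 r C e : 0 <= C -> `|r| <= C -> (r <= 1 \/ r ^+ 2 <= 4 * C) ->
  `|e| <= 1 -> Phi (r + e) (C + 1) <= 8.
Proof.
move=> C0; rewrite !ler_norml => /andP[rl ru] small /andP[el eu].
apply: le_trans _ (expR2_le R); rewrite ler_expR ler_pdivrMr; last by lra.
rewrite /pos_part; case: (leP (r + e) 0) => re; first by rewrite expr0n /=; lra.
rewrite expr2; case: small => hr; nra.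
Qed.

(* For a large r the two shifted potentials are [E e^y] and [E e^-y] while
   [Phi r C = E e^dl] with [dl >= 9/16 y^2], so the bound [cosh y <= 1 + 9/16 y^2]
   applies. *)
Lemma Phi_shift_sum_large r C : 0 < C -> 1 < r <= C -> 4 * C < r ^+ 2 ->
  Phi (r + 1) (C + 1) + Phi (r - 1) (C + 1) <= 2 * Phi r C.
Proof.
move=> C0 /andP[r1 rC] rC2.
have pos_partE a : 0 <= a -> pos_part a = a by move=> a0; rewrite /pos_part max_l.
set E := expR ((r ^+ 2 + 1) / (3 * (C + 1))).
set y := 2 * r / (3 * (C + 1)).
set dl := (r ^+ 2 - C) / (3 * (C + 1) * C).
have -> : Phi (r + 1) (C + 1) = E * expR y.
  by rewrite /Phi pos_partE -?expRD /E /y; [congr expR; field; lra | lra].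
have -> : Phi (r - 1) (C + 1) = E * expR (- y).
  by rewrite /Phi pos_partE -?expRD /E /y; [congr expR; field; lra | lra].
have -> : Phi r C = E * expR dl.
  by rewrite /Phi pos_partE -?expRD /E /dl; [congr expR; field; lra | lra].
have y01 : 0 <= y <= 2 / 3.
  by rewrite divr_ge0 ?ler_pdivrMr /=; lra.
have dl_ge : 9 / 16 * y ^+ 2 <= dl.
  rewrite -subr_ge0.
  have -> : dl - 9 / 16 * y ^+ 2 =
      (4 * (C + 1) * (r ^+ 2 - C) - 3 * C * r ^+ 2) / (12 * (C + 1) ^+ 2 * C).
    by rewrite /dl /y; field; lra.
  by apply: divr_ge0; [nra | apply/ltW; rewrite !mulr_gt0 ?exprn_gt0 //; lra].
rewrite -mulrDr mulrCA ler_wpM2l ?expR_ge0 //.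
have := expR_addN_le y01; have := expR_ge1Dx dl; lra.
Qed.

Lemma Phi_shift_sum_le r C : 0 <= C -> `|r| <= C ->
  Phi (r + 1) (C + 1) + Phi (r - 1) (C + 1) <= 2 * Phi r C + 14.
Proof.
move=> C0 rC; have P1 := Phi_ge1 r C0.
have [[r1 rC2]|small] : (1 < r /\ 4 * C < r ^+ 2) \/ (r <= 1 \/ r ^+ 2 <= 4 * C).
  case: (ltP 1 r) => r1; last by right; left.
  by case: (ltP (4 * C) (r ^+ 2)) => rC2; [left | right; right].
- move: rC; rewrite ler_norml => /andP[_ rC].
  have r1C : 1 < r <= C by rewrite r1 rC.
  by have := @Phi_shift_sum_large r C ltac:(lra) r1C rC2; lra.
- have e1 : `|1 : R| <= 1 by rewrite normr1.
  have em1 : `|-1 : R| <= 1 by rewrite normrN normr1.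
  by have := Phi_shift_le8 C0 rC small e1; have := Phi_shift_le8 C0 rC small em1; lra.
Qed.

(* [r + e] is the convex combination of [r] and [r +- 1] with weight [|e|],
   so the step is bounded by the chord, whose slope is the weight [w(r, C)]. *)
Lemma Phi_step_le r C e : 0 <= C -> `|r| <= C -> `|e| <= 1 ->
  Phi (r + e) (C + `|e|) <= Phi r C + anh_weight r C * e + 7.
Proof.
move=> C0 rC e1.
have Cr : C = 0 -> r = 0 by move=> C00; apply/normr0_eq0/eqP; rewrite eq_le normr_ge0 -C00 rC.
have := Phi_shift_sum_le C0 rC; have := Phi_ge1 r C0; rewrite /anh_weight.
case: (leP 0 e) => e0; [rewrite ger0_norm // | rewrite ltr0_norm //].
- have e01 : 0 <= e <= 1 by rewrite e0 -(ger0_norm e0).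
  have := Phi_convex (r + 1) e01 C0 Cr.
  have -> : (1 - e) * r + e * (r + 1) = r + e by ring.
  move: e01 => /andP[_ ?]; nra.
- have e01 : 0 <= - e <= 1 by rewrite oppr_ge0 ltW //= -(ltr0_norm e0).
  have := Phi_convex (r - 1) e01 C0 Cr.
  have -> : (1 - - e) * r + - e * (r - 1) = r + e by ring.
  move: e01 => /andP[_ ?]; nra.
Qed.

End Potential.

Lemma sqrt_mul_add_le (R : realType) (a b x y : R) : 0 <= a -> 0 <= b -> 0 <= x -> 0 <= y ->
  Num.sqrt (a * x) + Num.sqrt (b * y) <= Num.sqrt ((a + b) * (x + y)).
Proof.
move=> a0 b0 x0 y0.
rewrite -(ger0_norm (addr_ge0 (sqrtr_ge0 _) (sqrtr_ge0 _))) -sqrtr_sqr.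
rewrite ler_sqrt ?mulr_ge0 ?addr_ge0 // sqrrD !sqr_sqrtr ?mulr_ge0 //.
have XY0 : 0 <= Num.sqrt (a * x) * Num.sqrt (b * y) by rewrite mulr_ge0 ?sqrtr_ge0.
have XY2 : (Num.sqrt (a * x) * Num.sqrt (b * y)) ^+ 2 = (a * y) * (b * x).
  by rewrite exprMn !sqr_sqrtr ?mulr_ge0 //; ring.
have := sqr_ge0 (a * y - b * x); have := mulr_ge0 a0 y0; have := mulr_ge0 b0 x0.
nra.
Qed.

Section Euclid.
Variables (R : realType) (d : nat).
Local Notation vec := 'rV[R]_d.
Implicit Types (x y z u v : vec) (a : R).

Lemma dotvC x y : dotv x y = dotv y x.
Proof. by apply: eq_bigr => j _; rewrite mulrC. Qed.

Lemma dotvDl x y z : dotv (x + y) z = dotv x z + dotv y z.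
Proof. by rewrite /dotv -big_split; apply: eq_bigr => j _; rewrite mxE mulrDl. Qed.

Lemma dotvZl a x y : dotv (a *: x) y = a * dotv x y.
Proof. by rewrite /dotv mulr_sumr; apply: eq_bigr => j _; rewrite mxE mulrA. Qed.

Lemma dotvNl x y : dotv (- x) y = - dotv x y.
Proof. by rewrite -scaleN1r dotvZl mulN1r. Qed.

Lemma dotvBl x y z : dotv (x - y) z = dotv x z - dotv y z.
Proof. by rewrite dotvDl dotvNl. Qed.

Lemma dotvZr a x y : dotv y (a *: x) = a * dotv y x.
Proof. by rewrite dotvC dotvZl dotvC. Qed.

Lemma dotvBr x y z : dotv z (x - y) = dotv z x - dotv z y.
Proof. by rewrite dotvC dotvBl !(dotvC z). Qed.

Lemma dotvNr x y : dotv x (- y) = - dotv x y.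
Proof. by rewrite dotvC dotvNl dotvC. Qed.

Lemma dotv_ge0 x : 0 <= dotv x x.
Proof. by apply: sumr_ge0 => j _; rewrite -expr2 sqr_ge0. Qed.

Lemma norm2_ge0 x : 0 <= norm2 x.
Proof. exact: sqrtr_ge0. Qed.

Lemma sqr_norm2 x : norm2 x ^+ 2 = dotv x x.
Proof. by rewrite sqr_sqrtr // dotv_ge0. Qed.

Lemma norm2N x : norm2 (- x) = norm2 x.
Proof. by rewrite /norm2 dotvNl dotvNr opprK. Qed.

Lemma dotv_le_sqr x (c : R) : norm2 x <= c -> dotv x x <= c ^+ 2.
Proof. by move=> xc; rewrite -sqr_norm2 ler_sqr ?nnegrE ?norm2_ge0 // (le_trans (norm2_ge0 x)). Qed.

(* The discriminant of [t |-> |x - t y|^2] is nonpositive. *)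
Lemma dotv_le_norm2 x y : dotv x y <= norm2 x * norm2 y.
Proof.
set A := dotv x x; set B := dotv y y; set C := dotv x y.
have quad t : 0 <= A - 2 * t * C + t ^+ 2 * B.
  have := dotv_ge0 (x - t *: y).
  rewrite dotvBl !dotvBr !dotvZl !dotvZr (dotvC y x) -/A -/B -/C expr2 -!mulrA; lra.
have [C0|C0] := leP C 0; first by apply: le_trans C0 _; rewrite mulr_ge0 ?norm2_ge0.
have [B0|B0] := eqVneq B 0.
  have := quad ((A + 1) / (2 * C)); rewrite B0 mulr0 addr0.
  have -> : 2 * ((A + 1) / (2 * C)) * C = A + 1 by field; rewrite gt_eqF.
  lra.
have Bp : 0 < B by rewrite lt0r B0 dotv_ge0.
have := quad (C / B).
have -> : A - 2 * (C / B) * C + (C / B) ^+ 2 * B = A - C ^+ 2 / B by field.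
rewrite subr_ge0 ler_pdivrMr // => C2.
rewrite -(ger0_norm (ltW C0)) -sqrtr_sqr /norm2 -sqrtrM ?dotv_ge0 // ler_sqrt //.
by rewrite mulr_ge0 ?dotv_ge0.
Qed.

Lemma sqr_dist_shift_le x u u' (D : R) : norm2 (x - u) <= D -> norm2 (x - u') <= D ->
  dotv (x - u') (x - u') <= dotv (x - u) (x - u) + 2 * D * norm2 (u' - u).
Proof.
have -> : x - u' = (x - u) - (u' - u) by rewrite opprB addrA subrK.
move: (x - u) (u' - u) => a e aD aeD.
have := dotv_le_norm2 (- a) e; have := dotv_le_norm2 (- (a - e)) e.
rewrite !norm2N !dotvNl dotvBl.
have := ler_wpM2r (norm2_ge0 e) aD; have := ler_wpM2r (norm2_ge0 e) aeD.
rewrite !dotvBl !dotvBr (dotvC e a); lra.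
Qed.

Section Projection.
Variables (Omega : vec -> Prop) (Pi : vec -> vec).
Hypotheses (Omega_convex : convex_setv Omega) (Pi_proj : is_euclid_proj Omega Pi).

Lemma proj_in x : Omega (Pi x).
Proof. by have [] := Pi_proj x. Qed.

(* Comparing [Pi x] with the points [a u + (1 - a) Pi x] of the segment
   towards [u], for a small [a > 0]. *)
Lemma proj_obtuse x u : Omega u -> dotv (x - Pi x) (u - Pi x) <= 0.
Proof.
move=> Ou; have [Op Pi_min] := Pi_proj x.
have segE a : x - (a *: u + (1 - a) *: Pi x) = (x - Pi x) - a *: (u - Pi x).
  by apply/rowP => j; rewrite !mxE; ring.
move: (x - Pi x) (u - Pi x) segE Pi_min => v e segE Pi_min.
have seg_ge a : 0 <= a -> a <= 1 -> 2 * a * dotv v e <= a ^+ 2 * dotv e e.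
  move=> a0 a1; have := Pi_min _ (Omega_convex Ou Op a0 a1).
  rewrite segE -ler_sqr ?nnegrE ?norm2_ge0 // !sqr_norm2.
  by rewrite !dotvBl !dotvBr !dotvZl !dotvZr (dotvC e v) expr2; lra.
rewrite leNgt; apply/negP => ve.
have ee := dotv_ge0 e.
set a := dotv v e / (dotv v e + dotv e e).
have den : 0 < dotv v e + dotv e e by lra.
have a0 : 0 < a by rewrite divr_gt0.
have a1 : a <= 1 by rewrite ler_pdivrMr //; lra.
have ae : a * dotv e e <= dotv v e by rewrite /a mulrAC ler_pdivrMr //; nra.
have := seg_ge a (ltW a0) a1; rewrite expr2 -mulrA; nra.
Qed.

Lemma proj_nonexpansive x u : Omega u ->
  dotv (Pi x - u) (Pi x - u) <= dotv (x - u) (x - u).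
Proof.
move=> /(proj_obtuse x); have -> : x - u = (x - Pi x) - (u - Pi x) by rewrite opprB addrA subrK.
have -> : Pi x - u = - (u - Pi x) by rewrite opprB.
move: (x - Pi x) (u - Pi x) => v e ve.
rewrite dotvNl dotvNr opprK !dotvBl !dotvBr (dotvC e v).
have := dotv_ge0 v; lra.
Qed.

End Projection.

Section Jensen.
Variables (I : eqType) (P : pred I) (q : I -> R) (x : I -> vec).
Hypothesis q_ge0 : forall i, P i -> 0 <= q i.

Local Notation wsum s := (\sum_(i <- s | P i) q i).
Local Notation wavg s := (\sum_(i <- s | P i) (q i / wsum s) *: x i).

Lemma wavg_rescale s (c : R) :
  \sum_(i <- s | P i) (q i * c) *: x i = (wsum s * c) *: wavg s.
Proof.
have [s0|s0] := eqVneq (wsum s) 0.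
  rewrite s0 mul0r scale0r; apply: big1_seq => i /andP[Pi si].
  move/eqP: s0; rewrite psumr_eq0 // => /allP/(_ i si); rewrite Pi => /eqP->.
  by rewrite mul0r scale0r.
by rewrite scaler_sumr; apply: eq_bigr => i _; rewrite scalerA; congr (_ *: _); field.
Qed.

(* When all weights vanish, [x / 0 = 0] makes the average [0], hence [Omega 0]. *)
Lemma jensen_wavg (Omega : vec -> Prop) (h : vec -> R) s :
  convex_setv Omega -> Omega 0 -> convex_fun_on Omega h ->
  (forall i, P i -> Omega (x i)) ->
  Omega (wavg s) /\ wsum s * h (wavg s) <= \sum_(i <- s | P i) q i * h (x i).
Proof.
move=> cvx O0 hcvx Ox; elim: s => [|a s [IH1 IH2]]; first by rewrite !big_nil mul0r.
rewrite !big_cons; case Pa: (P a) => //.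
have qa := q_ge0 Pa; have Q0 : 0 <= wsum s by rewrite sumr_ge0.
rewrite (wavg_rescale s (q a + wsum s)^-1).
have [Qa0|Qa0] := eqVneq (q a + wsum s) 0.
  have [qa0 s0] : q a = 0 /\ wsum s = 0 by split; lra.
  rewrite Qa0 invr0 !mulr0 !scale0r addr0 mul0r qa0 mul0r add0r; split => //.
  by apply: le_trans IH2; rewrite s0 mul0r.
have Qa : 0 < q a + wsum s by rewrite lt0r Qa0 addr_ge0.
set Q := q a + wsum s in Qa0 Qa *.
have s01 : 0 <= q a / Q <= 1 by rewrite divr_ge0 ?(ltW Qa) //= ler_pdivrMr // mul1r lerDl.
have -> : (q a / Q) *: x a + (wsum s / Q) *: wavg s = (q a / Q) *: x a + (1 - q a / Q) *: wavg s.
  by congr (_ + _ *: _); rewrite /Q; field.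
move: s01 => /andP[s0 s1]; split; first exact: cvx (Ox _ Pa) IH1 s0 s1.
apply: le_trans (ler_wpM2l (ltW Qa) (hcvx _ _ _ (Ox _ Pa) IH1 s0 s1)) _.
rewrite (_ : Q * (q a / Q * h (x a) + (1 - q a / Q) * h (wavg s)) =
    q a * h (x a) + wsum s * h (wavg s)); last by rewrite /Q; field.
by rewrite lerD2l.
Qed.

End Jensen.
End Euclid.

Lemma istart_le k t : (0 < t)%N -> (istart k t <= t)%N.
Proof. by move=> t0; rewrite /istart; have := leq_divM t.-1 (2 ^ k); lia. Qed.

Lemma istart_pred k t : (istart k t).-1 = (t.-1 %/ 2 ^ k * 2 ^ k)%N.
Proof. by rewrite /istart addn1. Qed.

Lemma istart1 k : istart k 1 = 1%N.
Proof. by rewrite /istart div0n mul0n. Qed.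

Lemma istartS k t : (0 < t)%N -> istart k t.+1 = istart k t \/ istart k t.+1 = t.+1.
Proof.
move=> t0; rewrite /istart /=.
have L0 : (0 < 2 ^ k)%N by rewrite expn_gt0.
have := leq_divM t.-1 (2 ^ k); have := ltn_ceil t.-1 L0; have := leq_divM t (2 ^ k).
have : (t.-1 %/ 2 ^ k <= t %/ 2 ^ k)%N by apply: leq_div2r; lia.
rewrite leq_eqVlt => /orP[/eqP->|lt_q]; [by left | right].
have := leq_mul2r (2 ^ k) (t.-1 %/ 2 ^ k).+1 (t %/ 2 ^ k); rewrite lt_q orbT mulSn; lia.
Qed.

Section ActiveLevels.
Variables (R : realType) (T : nat).

Definition active k := (2 ^ k <= T)%N.
Definition nactive : R := \sum_(0 <= k < T.+1 | active k) 1.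

Lemma active_ltn k : active k -> (k < T.+1)%N.
Proof. by move=> kT; have := ltn_expl k (ltnSn 1); rewrite /active in kT; lia. Qed.

Lemma nactive_ge0 : 0 <= nactive.
Proof. exact: sumr_ge0. Qed.

Lemma nactive_le : (1 <= T)%N -> nactive <= 1 + log2r (T%:R : R).
Proof.
move=> T1; set L := trunc_log 2 T.
have L_le : (2 ^ L <= T)%N by apply: trunc_logP.
have -> : nactive = \sum_(0 <= k < L.+1) (1 : R).
  rewrite /nactive (big_nat_widen 0 L.+1 T.+1 xpredT); last first.
    by have := ltn_expl L (ltnSn 1); lia.
  apply: eq_bigl => k /=; apply/idP/idP => [kT | kL]; first exact: trunc_log_max.
  by apply: leq_trans L_le; apply: leq_pexp2l.
rewrite sumr_const_nat subn0 -natr1 addrC lerD2l /log2r ler_pdivlMr ?ln_gt0 ?ltr1n //.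
by rewrite mulr_natl -lnXn ?ltr0n // -natrX ler_ln ?posrE ?ltr0n ?expn_gt0 // ler_nat.
Qed.

Lemma log2r_ge0 n : (0 < n)%N -> 0 <= log2r (n%:R : R).
Proof. by move=> n0; rewrite /log2r divr_ge0 ?ln_ge0 ?ler1n. Qed.

Lemma cT_ge0 : (2 <= T)%N -> 0 <= cT R T.
Proof.
move=> T2; have T2r : (2 : R) <= T%:R by rewrite (ler_nat R 2 T).
have lg := log2r_ge0 (ltnW T2); have l1T : 0 <= ln (1 + T%:R : R) by rewrite ln_ge0 //; lra.
by rewrite /cT !addr_ge0 // ln_ge0 // ?ler_pdivlMr //; lra.
Qed.

(* [expR (cT T) = e T (1 + log2 T) (5 + 3 ln (1 + T)) / 2], and [e >= 9/4]
   and [(5 + 3 ln (1 + T)) / 2 >= 4] absorb the constant 8. *)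
Lemma exp_cT_ge : (2 <= T)%N -> 8 * T%:R * nactive <= expR (cT R T).
Proof.
move=> T2; have T2r : (2 : R) <= T%:R by rewrite (ler_nat R 2 T).
have l1T : 1 <= ln (1 + T%:R : R).
  by rewrite -ler_expR lnK ?posrE; have := expR1_le R; lra.
have lg := log2r_ge0 (ltnW T2).
have nT := nactive_le (ltnW T2); have n0 := nactive_ge0.
rewrite /cT; set a2 := 1 + log2r (T%:R : R) in nT *; set a3 := (5 + 3 * ln (1 + T%:R : R)) / 2.
have a3_ge : 4 <= a3 by rewrite /a3 ler_pdivlMr //; lra.
rewrite !expRD !lnK ?posrE ?ltr0n; [|lra|rewrite /a2; lra|lia].
apply: (@le_trans _ _ (9 * T%:R * a2)).
  have := ler_wpM2l (ler0n R T) nT; have := mulr_ge0 (ler0n R T) n0; lra.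
have e_a3 : 9 <= expR 1 * a3 by have := expR1_ge R; nra.
rewrite -mulrA (_ : _ * a2 * a3 = expR 1 * a3 * (T%:R * a2)); last by ring.
by rewrite ler_wpM2r // mulr_ge0 //; lra.
Qed.

End ActiveLevels.

Section AOD.
Variables (R : realType) (d T : nat) (Omega : 'rV[R]_d -> Prop) (D G : R)
  (Pi : 'rV[R]_d -> 'rV[R]_d) (f : nat -> 'rV[R]_d -> R)
  (g : nat -> 'rV[R]_d -> 'rV[R]_d) (init : nat -> 'rV[R]_d) (w : nat -> 'rV[R]_d).
Hypotheses (Omega_convex : convex_setv Omega) (Pi_proj : is_euclid_proj Omega Pi).
Hypothesis f_convex : forall t, (1 <= t <= T)%N -> convex_fun_on Omega (f t).
Hypothesis Omega0 : Omega 0.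
Hypothesis f_range : forall t x, (1 <= t <= T)%N -> Omega x -> 0 <= f t x <= 1.
Hypothesis init_in : forall k, Omega (init k).
Hypothesis w_AOD : AOD_plays T D G Pi f g init w.

Local Notation x := (expert D G Pi g init).
Local Notation Rs := (Rstat D G Pi f g init w).
Local Notation Cs := (Cstat D G Pi f g init w).
Local Notation weight k t := (anh_weight (Rs k t) (Cs k t)).
Local Notation active := (active T).
Local Notation nactive := (nactive R T).

Definition inst_regret k t := f t (w t) - f t (x k t).
Definition potential t := \sum_(0 <= k < T.+1 | active k) Phi (Rs k t) (Cs k t).

Lemma expert_in k t : Omega (x k t).
Proof. by rewrite /expert; case: t => [|[|t]] //=; exact: proj_in Pi_proj _. Qed.

Lemma expertS k t : (0 < t)%N -> x k t.+1 = Pi (x k t - eta_lvl D G k *: g t (x k t)).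
Proof. by case: t. Qed.

Lemma Cstat_ge0 k t : 0 <= Cs k t.
Proof. by apply: sumr_ge0 => s _; exact: normr_ge0. Qed.

Lemma Rstat_le_Cstat k t : `|Rs k t| <= Cs k t.
Proof. exact: ler_norm_sum. Qed.

Lemma weight_ge0 k t : 0 <= weight k t.
Proof. exact: anh_weight_ge0 (Cstat_ge0 k t). Qed.

Lemma AOD_jensen t : (1 <= t <= T)%N ->
  Omega (w t) /\ \sum_(0 <= k < T.+1 | active k) weight k t * inst_regret k t <= 0.
Proof.
move=> tT; rewrite (w_AOD tT).
have [w_in jensen] := jensen_wavg (fun k (_ : active k) => weight_ge0 k t) (index_iota 0 T.+1)
  Omega_convex Omega0 (f_convex tT) (fun k (_ : active k) => expert_in k t).
split => //; rewrite -(w_AOD tT) in jensen *.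
rewrite /inst_regret; under eq_bigr do rewrite mulrBr.
by rewrite sumrB -mulr_suml subr_le0.
Qed.

Lemma inst_regret_le1 k t : (1 <= t <= T)%N -> `|inst_regret k t| <= 1.
Proof.
move=> tT; have [w_in _] := AOD_jensen tT.
have := f_range tT w_in; have := f_range tT (expert_in k t).
by rewrite /inst_regret ler_norml => /andP[? ?] /andP[? ?]; apply/andP; split; lra.
Qed.

Lemma stat1 k : Rs k 1 = 0 /\ Cs k 1 = 0.
Proof. by rewrite /Rstat /Cstat istart1 !big_geq. Qed.

Lemma statS k t : (0 < t)%N ->
  (Rs k t.+1 = Rs k t + inst_regret k t /\ Cs k t.+1 = Cs k t + `|inst_regret k t|) \/
  (Rs k t.+1 = 0 /\ Cs k t.+1 = 0).
Proof.
move=> t0; have t_ge := istart_le k t0; rewrite /Rstat /Cstat.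
by case: (istartS k t0) => ->; [left; rewrite !big_nat_recr | right; rewrite !big_geq].
Qed.

(* The potential of the level-[k] expert at the end of round [t], before it
   is possibly restarted at round [t + 1]. *)
Local Notation Phi_end k t := (Phi (Rs k t + inst_regret k t) (Cs k t + `|inst_regret k t|)).

Lemma Phi_end_ge1 k t : 1 <= Phi_end k t.
Proof. by rewrite Phi_ge1 ?addr_ge0 ?Cstat_ge0. Qed.

(* The first-order terms cancel: the played point makes the weighted
   instantaneous regrets sum to a nonpositive number. *)
Lemma sum_Phi_end_le t : (1 <= t <= T)%N ->
  \sum_(0 <= k < T.+1 | active k) Phi_end k t <= potential t + 7 * nactive.
Proof.
move=> tT; have [_ weighted_le0] := AOD_jensen tT.
apply: le_trans (ler_sum _ (fun k _ => Phi_step_le (Cstat_ge0 k t) (Rstat_le_Cstat k t)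
  (inst_regret_le1 k tT))) _.
by rewrite 2!big_split /= -/(potential t) /nactive mulr_sumr mulr1; lra.
Qed.

Lemma potentialS_le t : (1 <= t <= T)%N ->
  potential t.+1 <= \sum_(0 <= k < T.+1 | active k) Phi_end k t + nactive.
Proof.
move=> /andP[t0 _]; rewrite /nactive -big_split /=; apply: ler_sum => k _.
have := Phi_end_ge1 k t.
by case: (statS k t0) => -[-> ->] ?; rewrite ?Phi00 ?lerDl; lra.
Qed.

Lemma potential_le t : (1 <= t <= T)%N -> potential t <= (8 * t%:R - 7) * nactive.
Proof.
elim: t => [//|[_ _|t IH tT]].
  rewrite mulr1 (_ : 8 - 7 = 1 :> R) ?mul1r; last by lra.
  by apply: ler_sum => k _; have [-> ->] := stat1 k; rewrite Phi00.
have tT' : (1 <= t.+1 <= T)%N by move: tT; rewrite !ltnS => /andP[_ /ltnW ->].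
have := IH tT'; have := potentialS_le tT'; have := sum_Phi_end_le tT'.
rewrite -natr1; have := nactive_ge0; nra.
Qed.

Lemma Phi_end_le k t : active k -> (1 <= t <= T)%N -> Phi_end k t <= 8 * t%:R * nactive.
Proof.
move=> kT tT.
have single : Phi_end k t <= \sum_(0 <= k < T.+1 | active k) Phi_end k t.
  rewrite big_mkcond (bigD1_seq k) ?iota_uniq ?mem_index_iota ?active_ltn //= kT lerDl.
  by apply: sumr_ge0 => i _; case: ifP => // _; apply: le_trans (Phi_end_ge1 i t).
apply: le_trans single _; apply: le_trans (sum_Phi_end_le tT) _.
by have := potential_le tT; lra.
Qed.

Lemma Rstat_end_le k t c : active k -> (1 <= t <= T)%N -> 8 * T%:R * nactive <= expR c ->
  Rs k t + inst_regret k t <= Num.sqrt (3 * (Cs k t + `|inst_regret k t|) * c).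
Proof.
move=> kT tT c_ge.
have Phi_le : Phi_end k t <= expR c.
  apply: le_trans (Phi_end_le kT tT) (le_trans _ c_ge).
  by rewrite ler_wpM2r ?nactive_ge0 // ler_wpM2l // ler_nat; case/andP: tT.
move: Phi_le; rewrite ler_expR.
set r := Rs k t + _; set C := Cs k t + _.
have rC : `|r| <= C by apply: le_trans (ler_normD _ _) _; rewrite lerD ?Rstat_le_Cstat.
have [C0|C0] := eqVneq C 0.
  by move: rC; rewrite C0 normr_le0 => /eqP-> _; rewrite sqrtr_ge0.
have Cp : 0 < C by rewrite lt0r C0 (le_trans (normr_ge0 r)).
rewrite ler_pdivrMr ?mulr_gt0 // mulrC => r2.
apply: le_trans (le_pos_part r) _.
by rewrite -(ger0_norm (pos_part_ge0 r)) -sqrtr_sqr ler_sqrt // (le_trans (sqr_ge0 _) r2).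
Qed.

Lemma Cstat_end_le k t : (1 <= t <= T)%N ->
  Cs k t + `|inst_regret k t| <= (t - (istart k t).-1)%:R.
Proof.
move=> tT; have /andP[t0 _] := tT; have a_le := istart_le k t0.
have a_ge : (0 < istart k t)%N by rewrite /istart addn1.
have -> : Cs k t + `|inst_regret k t| = \sum_(istart k t <= s < t.+1) `|inst_regret k s|.
  by rewrite big_nat_recr.
apply: le_trans (_ : \sum_(istart k t <= s < t.+1) (1 : R) <= _).
  apply: ler_sum_nat => s /andP[s_ge s_lt]; apply: inst_regret_le1.
  by move: tT; lia.
by rewrite sumr_const_nat ler_nat; lia.
Qed.

(* Induction on the number of completed level-[k] intervals: the regret on
   each interval is at most [sqrt (3 c |I|)], and these add up by Cauchy-Schwarz. *)
Lemma meta_regret_le k c j n : active k -> 0 <= c -> 8 * T%:R * nactive <= expR c ->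
  (n <= T)%N -> (n <= j * 2 ^ k)%N ->
  \sum_(1 <= t < n.+1) inst_regret k t <= Num.sqrt (3 * c * j%:R * n%:R).
Proof.
move=> kT c0 c_ge; elim/ltn_ind: n j => -[|n] IH j nT nj.
  by rewrite big_geq // mulr0 sqrtr0.
have tT : (1 <= n.+1 <= T)%N by rewrite nT.
have a_le := istart_le k (ltn0Sn n).
have a_ge : (0 < istart k n.+1)%N by rewrite /istart addn1.
have aE := istart_pred k n.+1; rewrite /= in aE.
set a := istart k n.+1 in a_le a_ge aE *; set m := (n %/ 2 ^ k)%N in aE.
have a1_lt : (a.-1 < n.+1)%N by rewrite prednK.
have mj : (m < j)%N.
  by rewrite -(ltn_pmul2r (expn_gt0 2 k)) -aE (leq_trans a1_lt nj).
have IHa := IH a.-1 a1_lt m (leq_trans (ltnW a1_lt) nT) (eq_leq aE).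
rewrite (big_cat_nat _ (n := a)) //=; last exact: leqW.
rewrite -{1}(prednK a_ge) [X in _ + X]big_nat_recr //=.
have len_le : 3 * (Cs k n.+1 + `|inst_regret k n.+1|) * c <= 3 * c * (n.+1 - a.-1)%:R.
  have := Cstat_end_le k tT; have := Cstat_ge0 k n.+1; have := normr_ge0 (inst_regret k n.+1).
  rewrite -/a => ? ? ?; rewrite mulrAC ler_wpM2l ?mulr_ge0 //; lra.
have c3 : 0 <= 3 * c by rewrite mulr_ge0.
have last_le : Rs k n.+1 + inst_regret k n.+1 <= Num.sqrt (3 * c * (n.+1 - a.-1)%:R).
  by apply: le_trans (Rstat_end_le kT tT c_ge) _; rewrite ler_sqrt // mulr_ge0.
apply: le_trans (lerD IHa last_le) _.
apply: le_trans (sqrt_mul_add_le (mulr_ge0 c3 (ler0n _ m)) c3 (ler0n _ _) (ler0n _ _)) _.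
rewrite -natrD subnKC ?(ltnW a1_lt) // ler_sqrt ?mulr_ge0 // ler_wpM2r //.
have : (m.+1%:R : R) <= j%:R by rewrite ler_nat.
rewrite -natr1; nra.
Qed.

Hypotheses (D_gt0 : 0 < D) (G_gt0 : 0 < G).
Hypothesis g_subgrad : forall t x y, (1 <= t <= T)%N -> Omega x -> Omega y ->
  f t x + dotv (g t x) (y - x) <= f t y.
Hypothesis g_bound : forall t x, (1 <= t <= T)%N -> Omega x -> norm2 (g t x) <= G.
Hypothesis Omega_diam : forall x y, Omega x -> Omega y -> norm2 (x - y) <= D.

Local Notation eta k := (eta_lvl D G k).
Local Notation sqdist y z := (dotv (y - z) (y - z)).

Lemma eta_gt0 k : 0 < eta k.
Proof. by rewrite divr_gt0 // mulr_gt0 // sqrtr_gt0 ltr0n expn_gt0. Qed.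

Lemma ogd_step k (u : nat -> 'rV[R]_d) t : (1 <= t <= T)%N -> Omega (u t) -> Omega (u t.+1) ->
  2 * eta k * (f t (x k t) - f t (u t)) <=
  sqdist (x k t) (u t) - sqdist (x k t.+1) (u t.+1)
  + 2 * D * norm2 (u t.+1 - u t) + eta k ^+ 2 * G ^+ 2.
Proof.
move=> tT ut_in ut1_in; have /andP[t0 _] := tT; have eta0 := eta_gt0 k.
have x_in := expert_in k t; have x1_in := expert_in k t.+1.
have subgrad := g_subgrad tT x_in ut_in.
have nonexp := proj_nonexpansive Omega_convex Pi_proj (x k t - eta k *: g t (x k t)) ut_in.
rewrite -expertS // in nonexp.
have shift := sqr_dist_shift_le (Omega_diam x1_in ut_in) (Omega_diam x1_in ut1_in).
have grad_le := dotv_le_sqr (g_bound tT x_in).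
rewrite addrAC in nonexp; rewrite -opprB dotvNr in subgrad.
move: nonexp shift grad_le subgrad.
move: (sqdist (x k t.+1) (u t.+1)) (sqdist (x k t.+1) (u t)) (x k t - u t) (g t (x k t)).
move=> A1 A0 v gr.
rewrite !dotvBl !dotvBr !dotvZl !dotvZr (dotvC gr v) => nonexp shift grad_le subgrad.
have : eta k * (eta k * dotv gr gr) <= eta k ^+ 2 * G ^+ 2.
  by rewrite mulrA -expr2 ler_wpM2l ?sqr_ge0.
have : 2 * eta k * (f t (x k t) - f t (u t)) <= 2 * eta k * dotv v gr.
  by rewrite ler_wpM2l ?(mulr_ge0 _ (ltW eta0)) //; lra.
lra.
Qed.

Lemma ogd_regret_telescope k (u : nat -> 'rV[R]_d) n :
  (forall t, (1 <= t <= T.+1)%N -> Omega (u t)) -> (n <= T)%N ->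
  2 * eta k * \sum_(1 <= t < n.+1) (f t (x k t) - f t (u t)) <=
  sqdist (x k 1) (u 1) - sqdist (x k n.+1) (u n.+1)
  + 2 * D * \sum_(1 <= t < n.+1) norm2 (u t.+1 - u t) + eta k ^+ 2 * G ^+ 2 * n%:R.
Proof.
move=> u_in; elim: n => [_|n IH nT]; first by rewrite !big_geq // !mulr0 subrr !addr0.
have [tT u1 u2] : [/\ (1 <= n.+1 <= T)%N, (1 <= n.+1 <= T.+1)%N & (1 <= n.+2 <= T.+1)%N].
  by split; lia.
have := ogd_step k tT (u_in _ u1) (u_in _ u2).
have := IH (ltnW nT); rewrite !(big_nat_recr n.+1) //= -natr1; lra.
Qed.

Lemma ogd_dynamic_regret k (u : nat -> 'rV[R]_d) :
  (forall t, (1 <= t <= T.+1)%N -> Omega (u t)) ->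
  2 * eta k * \sum_(1 <= t < T.+1) (f t (x k t) - f t (u t)) <=
  D ^+ 2 + 2 * D * \sum_(1 <= t < T.+1) norm2 (u t.+1 - u t) + eta k ^+ 2 * G ^+ 2 * T%:R.
Proof.
move=> u_in; apply: le_trans (ogd_regret_telescope k u_in (leqnn T)) _.
have := dotv_le_sqr (Omega_diam (expert_in k 1) (u_in 1%N isT)).
have := dotv_ge0 (x k T.+1 - u T.+1); lra.
Qed.

End AOD.

Lemma up_log_level T i : (1 <= i <= up_log 2 T)%N ->
  [/\ (1 < T)%N, (2 ^ (up_log 2 T - i) <= T)%N & (T <= 2 ^ i * 2 ^ (up_log 2 T - i) <= 2 * T)%N].
Proof.
move=> /andP[i1 iS]; set s := up_log 2 T in iS *.
have T1 : (1 < T)%N by move: (leq_trans i1 iS); rewrite up_log_gt0 => /andP[].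
have /andP[Ts1 Ts] := up_log_bounds (ltnSn 1) T1; rewrite -/s in Ts1 Ts.
have s0 : (0 < s)%N by apply: leq_trans iS.
rewrite -expnD subnKC // Ts; split => //.
  by apply: leq_trans (ltnW Ts1); rewrite leq_pexp2l //; lia.
by rewrite -(prednK s0) expnS leq_mul2l /= ltnW.
Qed.

Lemma dyadic_scale_bounds (R : realType) (D P : R) (T i k : nat) : 0 < D -> (0 < i)%N ->
  (T <= 2 ^ i * 2 ^ k <= 2 * T)%N -> D * 2 ^+ i.-1 < P -> P <= D * 2 ^+ i ->
  [/\ P * (2 ^ k)%:R <= 2 * D * T%:R, D * T%:R <= 2 * P * (2 ^ k)%:R
     & (2 ^ i)%:R <= 1 + 2 * P / D].
Proof.
move=> D0 i0 /andP[T_le L_le] P_gt P_le.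
have e2i : 2 ^+ i = 2 * 2 ^+ i.-1 :> R by rewrite -exprS prednK.
have L0 : 0 <= (2 ^ k)%:R :> R := ler0n _ _.
have T_leR : T%:R <= 2 ^+ i * (2 ^ k)%:R :> R by rewrite -natrX -natrM ler_nat.
have L_leR : 2 ^+ i * (2 ^ k)%:R <= 2 * T%:R :> R by rewrite -natrX -!natrM ler_nat.
split.
- by have := ler_wpM2r L0 P_le; have := ler_wpM2l (ltW D0) L_leR; lra.
- have := ler_wpM2l (ltW D0) T_leR; have := ler_wpM2r L0 (ltW P_gt).
  by rewrite e2i; lra.
- have : 2 * 2 ^+ i.-1 <= 2 * P / D by rewrite ler_pdivlMr //; lra.
  by rewrite natrX e2i; lra.
Qed.

Section TunedOGD.
Variables (R : realType) (D G P L T E : R).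
Hypotheses (D_gt0 : 0 < D) (G_gt0 : 0 < G) (L_gt0 : 0 < L) (L_le : L <= T).
Hypotheses (PL_le : P * L <= 2 * D * T) (DT_le : D * T <= 2 * P * L).

Local Notation eta := (D / (G * Num.sqrt L)).

(* With step size [D / (G sqrt L)] and [L] within a factor 2 of [D T / P],
   both the comparator drift term and the gradient term are of order
   [G sqrt (D P T)]. *)
Lemma ogd_tuned_regret_le :
  2 * eta * E <= D ^+ 2 + 2 * D * P + eta ^+ 2 * G ^+ 2 * T ->
  E <= (D * G / 2 + 3 * G / 2 * Num.sqrt (2 * D * P)) * Num.sqrt T.
Proof.
move=> regret.
have T_gt0 : 0 < T by apply: lt_le_trans L_le.
have P_gt0 : 0 < P.
  have := lt_le_trans (mulr_gt0 D_gt0 T_gt0) DT_le.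
  by rewrite -mulrA pmulr_rgt0 // pmulr_lgt0.
have sL_gt0 : 0 < Num.sqrt L by rewrite sqrtr_gt0.
have sL_le : Num.sqrt L <= Num.sqrt T by rewrite ler_sqrt // ltW.
set sL := Num.sqrt L in regret sL_gt0 sL_le *; set sT := Num.sqrt T in sL_le *.
set rho := Num.sqrt (2 * D * P).
have sL2 : sL ^+ 2 = L by rewrite sqr_sqrtr // ltW.
have sT2 : sT ^+ 2 = T by rewrite sqr_sqrtr // ltW.
have rho2 : rho ^+ 2 = 2 * D * P by rewrite sqr_sqrtr // !mulr_ge0 // ltW.
have sT0 : 0 <= sT := sqrtr_ge0 T; have rho0 : 0 <= rho := sqrtr_ge0 _.
have E_le : E <= D * G * sL / 2 + G * P * sL + D * G * T / (2 * sL).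
  have eta2 : 0 < 2 * (D / (G * sL)) by rewrite mulr_gt0 // divr_gt0 // mulr_gt0.
  have -> : D * G * sL / 2 + G * P * sL + D * G * T / (2 * sL) =
      (D ^+ 2 + 2 * D * P + (D / (G * sL)) ^+ 2 * G ^+ 2 * T) / (2 * (D / (G * sL))).
    by field; rewrite !gt_eqF.
  by rewrite ler_pdivlMr // mulrC.
have drift : P * sL <= rho * sT.
  rewrite -ler_sqr ?nnegrE ?mulr_ge0 ?(ltW P_gt0) ?(ltW sL_gt0) // !exprMn sL2 sT2 rho2.
  by rewrite expr2 -mulrA; have := ler_wpM2l (ltW P_gt0) PL_le; lra.
have grad : D * T <= rho * sT * sL.
  rewrite -ler_sqr ?nnegrE ?mulr_ge0 ?(ltW D_gt0) ?(ltW T_gt0) ?(ltW sL_gt0) //.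
  rewrite !exprMn sL2 sT2 rho2.
  have := ler_wpM2l (mulr_ge0 (ltW D_gt0) (ltW T_gt0)) DT_le; rewrite !expr2; lra.
have grad' : D * G * T / (2 * sL) <= G / 2 * rho * sT.
  rewrite ler_pdivrMr ?mulr_gt0 //.
  have -> : G / 2 * rho * sT * (2 * sL) = G * (rho * sT * sL) by field.
  by rewrite [D * G]mulrC -(mulrA G D T) ler_pM2l.
have DG0 : 0 <= D * G by rewrite mulr_ge0 // ltW.
have := ler_wpM2l DG0 sL_le; have := ler_wpM2l (ltW G_gt0) drift; nra.
Qed.

End TunedOGD.

Theorem lemma5 (R : realType) (d T : nat) (Omega : 'rV[R]_d -> Prop) (D G : R)
    (Pi : 'rV[R]_d -> 'rV[R]_d) (f : nat -> 'rV[R]_d -> R)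
    (g : nat -> 'rV[R]_d -> 'rV[R]_d) (init : nat -> 'rV[R]_d)
    (w : nat -> 'rV[R]_d) (u : nat -> 'rV[R]_d) (i : nat) :
  convex_setv Omega ->
  is_euclid_proj Omega Pi ->
  0 < D -> 0 < G ->
  (forall t, (1 <= t <= T)%N -> convex_fun_on Omega (f t)) ->
  (forall t x y, (1 <= t <= T)%N -> Omega x -> Omega y ->
     f t x + dotv (g t x) (y - x) <= f t y) ->
  (* (A1) *)
  (forall t x, (1 <= t <= T)%N -> Omega x -> norm2 (g t x) <= G) ->
  (* (A2) *)
  Omega 0 ->
  (forall x y, Omega x -> Omega y -> norm2 (x - y) <= D) ->
  (* (A3) *)
  (forall t x, (1 <= t <= T)%N -> Omega x -> 0 <= f t x <= 1) ->
  (* arbitrary initial points of the experts of the first intervals *)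
  (forall k, Omega (init k)) ->
  AOD_plays T D G Pi f g init w ->
  (forall t, (1 <= t <= T.+1)%N -> Omega (u t)) ->
  (1 <= i <= up_log 2 T)%N ->
  let PT := \sum_(1 <= t < T.+1) norm2 (u t.+1 - u t) in
  D * 2 ^+ (i.-1) < PT -> PT <= D * 2 ^+ i ->
  \sum_(1 <= t < T.+1) f t (w t) - \sum_(1 <= t < T.+1) f t (u t)
    <= (D * G / 2 + 3 * G / 2 * Num.sqrt (2 * D * PT)
        + Num.sqrt (3 * cT R T * (1 + 2 * PT / D))) * Num.sqrt (T%:R).
Proof.
move=> Ocvx Pproj D0 G0 fcvx subg gb O0 diam frange init_in w_AOD u_in iS PT PT_gt PT_le.
have [T2 kT scale_k] := up_log_level iS; set k := (up_log 2 T - i)%N in kT scale_k.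
have [PL DT scale_i] := dyadic_scale_bounds D0 (andP iS).1 scale_k PT_gt PT_le.
have -> : \sum_(1 <= t < T.+1) f t (w t) - \sum_(1 <= t < T.+1) f t (u t) =
    \sum_(1 <= t < T.+1) inst_regret D G Pi f g init w k t +
    \sum_(1 <= t < T.+1) (f t (expert D G Pi g init k t) - f t (u t)).
  by rewrite -sumrB -big_split /=; apply: eq_bigr => t _; rewrite /inst_regret; ring.
have meta := meta_regret_le Ocvx Pproj fcvx O0 frange init_in w_AOD kT (cT_ge0 R T2)
  (exp_cT_ge R T2) (leqnn T) (andP scale_k).1.
have L0 : 0 < (2 ^ k)%:R :> R by rewrite ltr0n expn_gt0.
have L_leT : (2 ^ k)%:R <= T%:R :> R by rewrite ler_nat.
have ogd := ogd_tuned_regret_le D0 G0 L0 L_leT PL DT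
  (ogd_dynamic_regret Ocvx Pproj init_in D0 G0 subg gb diam k u_in).
have c0 := cT_ge0 R T2.
have : Num.sqrt (3 * cT R T * (2 ^ i)%:R * T%:R) <=
    Num.sqrt (3 * cT R T * (1 + 2 * PT / D)) * Num.sqrt T%:R.
  rewrite -sqrtrM ?mulr_ge0 ?(le_trans _ scale_i) // ler_sqrt ?mulr_ge0 ?(le_trans _ scale_i) //.
  by rewrite ler_wpM2r // ler_wpM2l ?mulr_ge0.
lra.
Qed.
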